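(* Let $E$ be a congruence on $\overline{\boldsymbol{T}(X_1,\ldots,X_n)}$. The following are equivalent: (1) if $(f,-\infty)\in E$, then $f=-\infty$; (2) $\overline{\boldsymbol{T}(X_1,\ldots,X_n)}/E$ is a semifield; (3) $E$ is a semifield.
   Context: $\boldsymbol{T}=\mathbb{R}\cup\{-\infty\}$ with $a\oplus b=\max\{a,b\}$, $a\odot b=a+b$. $\overline{\boldsymbol{T}[X_1,\ldots,X_n]}$ is the tropical polynomial semiring modulo identifying polynomials defining the same function $\boldsymbol{T}^n\to\boldsymbol{T}$; it is cancellative and $\overline{\boldsymbol{T}(X_1,\ldots,X_n)}$ is its semifield of fractions, with zero $-\infty$ and one $0$. A semifield is a commutative semiring with $0\neq1$ in which every nonzero element is multiplicatively invertible. A congruence is an equivalence relation $E\subset S\times S$ compatible with both operations; $E$ is a subsemiring of $S\times S$ (componentwise operations, zero $(-\infty,-\infty)$, one $(0,0)$), and ''$E$ is a semifield'' refers to this structure. *)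

From Stdlib Require Import Reals List.
Open Scope R_scope.

(** * The tropical semifield T = R ∪ {-oo}; None encodes -oo. *)
Definition T : Type := option R.

Definition tadd (a b : T) : T :=
  match a, b with
  | None, _ => b
  | _, None => a
  | Some x, Some y => Some (Rmax x y)
  end.

Definition tmul (a b : T) : T :=
  match a, b with
  | Some x, Some y => Some (x + y)
  | _, _ => None
  end.

(** tropical power a^k = k*a, with a^0 = 0 (the tropical one), also for a = -oo *)
Fixpoint tpow (a : T) (k : nat) : T :=
  match k with 0%nat => Some 0 | S k => tmul a (tpow a k) end.

(** A term is c ⊙ X_1^{e 0} ⊙ ... ⊙ X_n^{e (n-1)} with c ∈ R (terms with
    coefficient -oo are simply absent); only e 0 .. e (n-1) are used. *)
Record term := Term { coef : R; expo : nat -> nat }.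
Definition poly := list term.

(** points of T^n: x : nat -> T, only x 0 .. x (n-1) are used. *)
Fixpoint mon_eval (n : nat) (e : nat -> nat) (x : nat -> T) : T :=
  match n with
  | 0%nat => Some 0
  | S m => tmul (mon_eval m e x) (tpow (x m) (e m))
  end.

Definition term_eval (n : nat) (t : term) (x : nat -> T) : T :=
  tmul (Some (coef t)) (mon_eval n (expo t) x).

Fixpoint poly_eval (n : nat) (p : poly) (x : nat -> T) : T :=
  match p with
  | nil => None
  | t :: p' => tadd (term_eval n t x) (poly_eval n p' x)
  end.

Definition term_mul (t s : term) : term :=
  Term (coef t + coef s) (fun i => (expo t i + expo s i)%nat).
Definition one_term : term := Term 0 (fun _ => 0%nat).

Definition poly_add (p q : poly) : poly := p ++ q.
Definition poly_mul (p q : poly) : poly := flat_map (fun t => map (term_mul t) q) p.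

(** Nonzero elements of the polynomial-function semiring: a polynomial defines
    the constant function -oo iff it has no terms, so nonzero denominators are
    represented as nonempty term lists (head, tail). *)
Definition npoly : Type := (term * poly)%type.
Definition to_poly (q : npoly) : poly := fst q :: snd q.
Definition npoly_mul (a b : npoly) : npoly :=
  (term_mul (fst a) (fst b),
   map (term_mul (fst a)) (snd b) ++ poly_mul (snd a) (to_poly b)).

(** A fraction is (numerator, nonzero denominator); two fractions f/g, f'/g'
    are equal iff f ⊙ g' = f' ⊙ g as functions T^n -> T (the usual equality of
    fractions; the semiring is cancellative). *)
Definition rat_fun : Type := (poly * npoly)%type.

Definition rf_eq (n : nat) (f g : rat_fun) : Prop :=
  forall x : nat -> T,
    tmul (poly_eval n (fst f) x) (poly_eval n (to_poly (snd g)) x) =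
    tmul (poly_eval n (fst g) x) (poly_eval n (to_poly (snd f)) x).

Definition rf_zero : rat_fun := (nil, (one_term, nil)).
Definition rf_one : rat_fun := (one_term :: nil, (one_term, nil)).

Definition rf_add (f g : rat_fun) : rat_fun :=
  (poly_add (poly_mul (fst f) (to_poly (snd g))) (poly_mul (fst g) (to_poly (snd f))),
   npoly_mul (snd f) (snd g)).

Definition rf_mul (f g : rat_fun) : rat_fun :=
  (poly_mul (fst f) (fst g), npoly_mul (snd f) (snd g)).

(** * Congruences on the semifield T(X_1..X_n) (elements represented up to rf_eq):
    an equivalence relation, compatible with ⊕ and ⊙, and well defined on the
    semifield, i.e. containing its equality rf_eq. *)
Record congruence (n : nat) (E : rat_fun -> rat_fun -> Prop) : Prop := {
  cong_refl : forall f, E f f;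
  cong_sym : forall f g, E f g -> E g f;
  cong_trans : forall f g h, E f g -> E g h -> E f h;
  cong_eq : forall f g, rf_eq n f g -> E f g;
  cong_add : forall f f' g g', E f f' -> E g g' -> E (rf_add f g) (rf_add f' g');
  cong_mul : forall f f' g g', E f f' -> E g g' -> E (rf_mul f g) (rf_mul f' g')
}.

(** * Being a semifield, for a structure given by a carrier predicate P on a type A,
    its equality eqv (assumed to be a well-defined equality of the structure),
    zero z, one o, addition add, multiplication mul:
    a commutative semiring with 0 ≠ 1 in which every nonzero element is invertible. *)
Record is_semifield {A : Type} (P : A -> Prop) (eqv : A -> A -> Prop)
    (z o : A) (add mul : A -> A -> A) : Prop := {
  sf_zero_in : P z;
  sf_one_in : P o;
  sf_add_in : forall x y, P x -> P y -> P (add x y);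
  sf_mul_in : forall x y, P x -> P y -> P (mul x y);
  sf_addA : forall x y w, P x -> P y -> P w -> eqv (add x (add y w)) (add (add x y) w);
  sf_addC : forall x y, P x -> P y -> eqv (add x y) (add y x);
  sf_add0 : forall x, P x -> eqv (add z x) x;
  sf_mulA : forall x y w, P x -> P y -> P w -> eqv (mul x (mul y w)) (mul (mul x y) w);
  sf_mulC : forall x y, P x -> P y -> eqv (mul x y) (mul y x);
  sf_mul1 : forall x, P x -> eqv (mul o x) x;
  sf_mulD : forall x y w, P x -> P y -> P w ->
      eqv (mul x (add y w)) (add (mul x y) (mul x w));
  sf_mul0 : forall x, P x -> eqv (mul z x) z;
  sf_01 : ~ eqv z o;
  sf_inv : forall x, P x -> ~ eqv x z -> exists y, P y /\ eqv (mul x y) o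
}.

Definition pair_eq (n : nat) (p q : rat_fun * rat_fun) : Prop :=
  rf_eq n (fst p) (fst q) /\ rf_eq n (snd p) (snd q).
Definition pair_op (op : rat_fun -> rat_fun -> rat_fun) (p q : rat_fun * rat_fun)
  : rat_fun * rat_fun := (op (fst p) (fst q), op (snd p) (snd q)).

(** the quotient T(X)/E is a semifield: classes, with equality E *)
Definition quotient_is_semifield (E : rat_fun -> rat_fun -> Prop) : Prop :=
  is_semifield (fun _ : rat_fun => True) E rf_zero rf_one rf_add rf_mul.

(** E ⊂ T(X) × T(X), as a subsemiring with componentwise operations, is a semifield *)
Definition congruence_is_semifield (n : nat) (E : rat_fun -> rat_fun -> Prop) : Prop :=
  is_semifield (fun p : rat_fun * rat_fun => E (fst p) (snd p)) (pair_eq n)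
    (rf_zero, rf_zero) (rf_one, rf_one) (pair_op rf_add) (pair_op rf_mul).

(* Evaluating at the point whose coordinates are all the tropical one 0, a
   fraction has value -oo exactly when its numerator has no terms; hence a
   fraction equals 0 iff its numerator is empty, and every other fraction f
   has the inverse den(f)/num(f).  If E identifies some f <> 0 with 0, then
   1 = f f^-1 ~ 0 f^-1 = 0, so neither T(X)/E nor E (whose element (f, 0) is
   then a nonzero non-unit) is a semifield.  Conversely, if the class of 0 is
   trivial, the semiring laws come from those of T(X), classes of nonzero
   fractions are inverted by their inverses, and for (f, g) in E both f and g
   are nonzero and (f^-1, g^-1) lies in E again, because inverses of
   congruent units are congruent. *)
From Pilot Require Import Defs.
From Stdlib Require Import Reals List.
From Stdlib Require Import Lra Ring Setoid Morphisms.

Lemma Rmax_plus_distr (a b c : R) : Rmax (a + c) (b + c) = Rmax a b + c.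
Proof. unfold Rmax; destruct (Rle_dec (a + c) (b + c)), (Rle_dec a b); lra. Qed.

Definition tzero : T := None.
Definition tone : T := Some 0.

Lemma T_semi_ring : semi_ring_theory tzero tone tadd tmul (@eq T).
Proof.
  constructor.
  - intros [x|]; reflexivity.
  - intros [x|] [y|]; simpl; try reflexivity; now rewrite Rmax_comm.
  - intros [x|] [y|] [z|]; simpl; try reflexivity; now rewrite Rmax_assoc.
  - intros [x|]; simpl; try reflexivity; now rewrite Rplus_0_l.
  - intros [x|]; reflexivity.
  - intros [x|] [y|]; simpl; try reflexivity; now rewrite Rplus_comm.
  - intros [x|] [y|] [z|]; simpl; try reflexivity; now rewrite Rplus_assoc.
  - intros [x|] [y|] [z|]; simpl; try reflexivity; now rewrite Rmax_plus_distr.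
Qed.

Add Ring T_ring : T_semi_ring.

(* [ring] only recognises the constants in their folded forms [tzero] and [tone]. *)
Ltac tring :=
  try change (@None R) with tzero in *; try change (Some 0) with tone in *; ring.

Lemma tmul_neq_None (a b : T) : a <> None -> b <> None -> tmul a b <> None.
Proof. destruct a, b; simpl; congruence. Qed.

Lemma tadd_neq_None_l (a b : T) : a <> None -> tadd a b <> None.
Proof. destruct a, b; simpl; congruence. Qed.

Lemma tpowD (a : T) (m k : nat) : tpow a (m + k) = tmul (tpow a m) (tpow a k).
Proof. induction m as [|m IHm]; cbn [tpow Nat.add]; [|rewrite IHm]; tring. Qed.

Lemma mon_evalD n e e' x :
  mon_eval n (fun i => (e i + e' i)%nat) x = tmul (mon_eval n e x) (mon_eval n e' x).
Proof.
  induction n as [|n IHn]; cbn [mon_eval].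
  - simpl; now rewrite Rplus_0_r.
  - rewrite IHn, tpowD; tring.
Qed.

Lemma mon_eval0 n x : mon_eval n (fun _ => 0%nat) x = Some 0.
Proof.
  induction n as [|n IHn]; simpl; [reflexivity|].
  rewrite IHn; simpl; now rewrite Rplus_0_r.
Qed.

Lemma term_eval_mul n t s x :
  term_eval n (term_mul t s) x = tmul (term_eval n t x) (term_eval n s x).
Proof.
  unfold term_eval, term_mul; cbn [coef expo]; rewrite mon_evalD.
  change (Some (coef t + coef s)) with (tmul (Some (coef t)) (Some (coef s))); tring.
Qed.

Lemma term_eval_one n x : term_eval n one_term x = Some 0.
Proof. unfold term_eval; simpl; rewrite mon_eval0; simpl; now rewrite Rplus_0_r. Qed.

Lemma poly_eval_app n p q x :
  poly_eval n (p ++ q) x = tadd (poly_eval n p x) (poly_eval n q x).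
Proof. induction p as [|t p IHp]; cbn [app poly_eval]; [|rewrite IHp]; tring. Qed.

Lemma poly_eval_add n p q x :
  poly_eval n (poly_add p q) x = tadd (poly_eval n p x) (poly_eval n q x).
Proof. apply poly_eval_app. Qed.

Lemma poly_eval_map_term_mul n t q x :
  poly_eval n (map (term_mul t) q) x = tmul (term_eval n t x) (poly_eval n q x).
Proof.
  induction q as [|s q IHq]; cbn [map poly_eval]; [|rewrite IHq, term_eval_mul]; tring.
Qed.

Lemma poly_eval_mul n p q x :
  poly_eval n (poly_mul p q) x = tmul (poly_eval n p x) (poly_eval n q x).
Proof.
  induction p as [|t p IHp]; unfold poly_mul in *; cbn [flat_map poly_eval]; [tring|].
  rewrite poly_eval_app, poly_eval_map_term_mul, IHp; tring.
Qed.

Lemma npoly_eval_mul n a b x :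
  poly_eval n (to_poly (npoly_mul a b)) x =
  tmul (poly_eval n (to_poly a) x) (poly_eval n (to_poly b) x).
Proof.
  destruct a as [t p], b as [s q]; unfold to_poly, npoly_mul; cbn [fst snd poly_eval].
  rewrite poly_eval_app, poly_eval_map_term_mul, term_eval_mul, poly_eval_mul.
  cbn [to_poly fst snd poly_eval]; tring.
Qed.

Lemma poly_eval_one n x : poly_eval n (one_term :: nil) x = Some 0.
Proof. cbn [poly_eval]; now rewrite term_eval_one. Qed.

(* After evaluation, [rf_eq] between fractions built by the semiring operations
   is a polynomial identity in the commutative semiring [T]. *)
Ltac rfring :=
  unfold rf_eq; intro;
  cbn [fst snd rf_add rf_mul rf_zero rf_one to_poly];
  repeat rewrite ?poly_eval_add, ?poly_eval_mul, ?npoly_eval_mul, ?poly_eval_one;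
  cbn [to_poly fst snd poly_eval];
  repeat rewrite ?term_eval_one;
  tring.

Section FractionLaws.
Variable n : nat.

Lemma rf_addA f g h : rf_eq n (rf_add f (rf_add g h)) (rf_add (rf_add f g) h).
Proof. rfring. Qed.
Lemma rf_addC f g : rf_eq n (rf_add f g) (rf_add g f).
Proof. rfring. Qed.
Lemma rf_add0 f : rf_eq n (rf_add rf_zero f) f.
Proof. rfring. Qed.
Lemma rf_mulA f g h : rf_eq n (rf_mul f (rf_mul g h)) (rf_mul (rf_mul f g) h).
Proof. rfring. Qed.
Lemma rf_mulC f g : rf_eq n (rf_mul f g) (rf_mul g f).
Proof. rfring. Qed.
Lemma rf_mul1 f : rf_eq n (rf_mul rf_one f) f.
Proof. rfring. Qed.
Lemma rf_mulDr f g h : rf_eq n (rf_mul f (rf_add g h)) (rf_add (rf_mul f g) (rf_mul f h)).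
Proof. rfring. Qed.
Lemma rf_mul0 f : rf_eq n (rf_mul rf_zero f) rf_zero.
Proof. rfring. Qed.

Lemma rf_eq_sym f g : rf_eq n f g -> rf_eq n g f.
Proof. intros H x; symmetry; apply H. Qed.

End FractionLaws.

Lemma tpow_neq_None (a : T) k : a <> None -> tpow a k <> None.
Proof.
  intro Ha; induction k as [|k IHk]; simpl; [discriminate|].
  now apply tmul_neq_None.
Qed.

Lemma mon_eval_neq_None n e x : (forall i, x i <> None) -> mon_eval n e x <> None.
Proof.
  intro Hx; induction n as [|n IHn]; simpl; [discriminate|].
  apply tmul_neq_None; [exact IHn | now apply tpow_neq_None].
Qed.

Lemma poly_eval_cons_neq_None n t p x :
  (forall i, x i <> None) -> poly_eval n (t :: p) x <> None.
Proof.
  intro Hx; simpl; apply tadd_neq_None_l, tmul_neq_None; [discriminate|].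
  now apply mon_eval_neq_None.
Qed.

Lemma rf_eq_num_nil n f g :
  rf_eq n f g -> fst f = nil :> Defs.poly -> fst g = nil :> Defs.poly.
Proof.
  intros Hfg Hf.
  set (x := fun _ : nat => Some 0 : T).
  assert (Hx : forall i, x i <> None) by (intro; discriminate).
  specialize (Hfg x); rewrite Hf in Hfg; cbn [poly_eval tmul] in Hfg.
  destruct (fst g) as [|t p]; [reflexivity | exfalso].
  destruct (snd f) as [s q].
  pose proof (poly_eval_cons_neq_None n t p x Hx) as Hp.
  pose proof (poly_eval_cons_neq_None n s q x Hx) as Hq.
  change (s :: q) with (to_poly (s, q)) in Hq.
  destruct (poly_eval n (t :: p) x), (poly_eval n (to_poly (s, q)) x);
    simpl in Hfg; congruence.
Qed.

Lemma rf_eq_zero n f : rf_eq n f rf_zero <-> fst f = nil :> Defs.poly.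
Proof.
  split.
  - intro H; apply (rf_eq_num_nil n rf_zero f); [now apply rf_eq_sym | reflexivity].
  - destruct f as [p d]; cbn [fst]; intros ->; rfring.
Qed.

Lemma rf_zero_neq_one n : ~ rf_eq n rf_zero rf_one.
Proof. intro H; discriminate (rf_eq_num_nil n _ _ H eq_refl). Qed.

Definition rf_inv (f : rat_fun) : rat_fun :=
  match fst f with
  | nil => rf_zero
  | t :: p => (to_poly (snd f), (t, p))
  end.

Lemma rf_mulV n f : fst f <> nil :> Defs.poly -> rf_eq n (rf_mul f (rf_inv f)) rf_one.
Proof.
  destruct f as [[|t p] d]; cbn [fst]; intro Hf; [congruence|].
  unfold rf_inv; cbn [fst snd].
  change (t :: p) with (to_poly (t, p)) at 1; rfring.
Qed.

Definition zero_class_trivial (n : nat) (E : rat_fun -> rat_fun -> Prop) : Prop :=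
  forall f, E f rf_zero -> rf_eq n f rf_zero.

Lemma zero_class_of_congruence_semifield n E :
  congruence_is_semifield n E -> zero_class_trivial n E.
Proof.
  intros S f Ef; apply rf_eq_zero.
  destruct (fst f) as [|t p] eqn:Hf; [reflexivity | exfalso].
  destruct (sf_inv _ _ _ _ _ _ S (f, rf_zero)) as [[a b] [_ [_ Hb]]].
  - exact Ef.
  - intros [H _]; apply rf_eq_zero in H; simpl in H; congruence.
  - discriminate (rf_eq_num_nil n _ _ Hb eq_refl).
Qed.

Section Congruence.
Variables (n : nat) (E : rat_fun -> rat_fun -> Prop).
Hypothesis E_cong : congruence n E.

Local Instance cong_Equivalence : Equivalence E.
Proof.
  split; red; [apply (cong_refl _ _ E_cong) | apply (cong_sym _ _ E_cong)
              | apply (cong_trans _ _ E_cong)].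
Qed.

Local Instance rf_add_cong : Proper (E ==> E ==> E) rf_add.
Proof. intros f f' Hf g g' Hg; now apply (cong_add _ _ E_cong). Qed.

Local Instance rf_mul_cong : Proper (E ==> E ==> E) rf_mul.
Proof. intros f f' Hf g g' Hg; now apply (cong_mul _ _ E_cong). Qed.

Let E_of_rf_eq f g : rf_eq n f g -> E f g := cong_eq _ _ E_cong f g.

Lemma cong_inv f f' g g' :
  E f g -> rf_eq n (rf_mul f f') rf_one -> rf_eq n (rf_mul g g') rf_one -> E f' g'.
Proof.
  intros Efg Hf Hg.
  transitivity (rf_mul f' (rf_mul g g')).
  - rewrite (E_of_rf_eq _ _ Hg); apply E_of_rf_eq; rfring.
  - rewrite <- Efg.
    transitivity (rf_mul (rf_mul f f') g'); [apply E_of_rf_eq; rfring|].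
    rewrite (E_of_rf_eq _ _ Hf); apply E_of_rf_eq, rf_mul1.
Qed.

Lemma cong_zero_one_of_unit f f' :
  E f rf_zero -> rf_eq n (rf_mul f f') rf_one -> E rf_zero rf_one.
Proof.
  intros Ef Hf.
  rewrite <- (E_of_rf_eq _ _ Hf), Ef.
  symmetry; apply E_of_rf_eq, rf_mul0.
Qed.

Lemma zero_class_of_zero_one : ~ E rf_zero rf_one -> zero_class_trivial n E.
Proof.
  intros H01 f Ef; apply rf_eq_zero.
  destruct (fst f) as [|t p] eqn:Hf; [reflexivity | exfalso].
  apply H01, (cong_zero_one_of_unit f (rf_inv f) Ef), rf_mulV; congruence.
Qed.

Lemma zero_class_of_quotient : quotient_is_semifield E -> zero_class_trivial n E.
Proof. intro Q; apply zero_class_of_zero_one, (sf_01 _ _ _ _ _ _ Q). Qed.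

Section TrivialZeroClass.
Hypothesis E_zero : zero_class_trivial n E.

Lemma cong_zero f g : E f g -> rf_eq n f rf_zero -> rf_eq n g rf_zero.
Proof. intros Efg Hf; apply E_zero; rewrite <- Efg; now apply E_of_rf_eq. Qed.

Lemma quotient_of_zero_class : quotient_is_semifield E.
Proof.
  constructor; try (intros; exact I).
  - intros f g h _ _ _; apply E_of_rf_eq, rf_addA.
  - intros f g _ _; apply E_of_rf_eq, rf_addC.
  - intros f _; apply E_of_rf_eq, rf_add0.
  - intros f g h _ _ _; apply E_of_rf_eq, rf_mulA.
  - intros f g _ _; apply E_of_rf_eq, rf_mulC.
  - intros f _; apply E_of_rf_eq, rf_mul1.
  - intros f g h _ _ _; apply E_of_rf_eq, rf_mulDr.
  - intros f _; apply E_of_rf_eq, rf_mul0.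
  - intro E01; apply (rf_zero_neq_one n), rf_eq_sym, E_zero; now symmetry.
  - intros f _ Ef; exists (rf_inv f); split; [exact I|].
    apply E_of_rf_eq, rf_mulV; intro Hf.
    apply Ef, E_of_rf_eq; now apply rf_eq_zero.
Qed.

Lemma congruence_semifield_of_zero_class : congruence_is_semifield n E.
Proof.
  constructor; cbn [fst snd pair_op].
  - reflexivity.
  - reflexivity.
  - intros p q Ep Eq; now apply rf_add_cong.
  - intros p q Ep Eq; now apply rf_mul_cong.
  - intros p q r _ _ _; split; apply rf_addA.
  - intros p q _ _; split; apply rf_addC.
  - intros p _; split; apply rf_add0.
  - intros p q r _ _ _; split; apply rf_mulA.
  - intros p q _ _; split; apply rf_mulC.
  - intros p _; split; apply rf_mul1.
  - intros p q r _ _ _; split; apply rf_mulDr.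
  - intros p _; split; apply rf_mul0.
  - intros [H01 _]; exact (rf_zero_neq_one n H01).
  - intros [f g] Efg Hfg; cbn [fst snd] in *.
    assert (Hf : fst f <> nil :> Defs.poly).
    { intro Hf; apply Hfg; split; [now apply rf_eq_zero|].
      apply (cong_zero f); [exact Efg | now apply rf_eq_zero]. }
    assert (Hg : fst g <> nil :> Defs.poly).
    { intro Hg; apply Hfg; split; [|now apply rf_eq_zero].
      apply (cong_zero g); [now symmetry | now apply rf_eq_zero]. }
    exists (rf_inv f, rf_inv g); cbn [fst snd pair_op].
    split; [apply (cong_inv f _ g _ Efg); now apply rf_mulV|].
    split; now apply rf_mulV.
Qed.

End TrivialZeroClass.

End Congruence.

Theorem lemma3p4 (n : nat) (E : rat_fun -> rat_fun -> Prop) :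
  congruence n E ->
  ((forall f, E f rf_zero -> rf_eq n f rf_zero) <-> quotient_is_semifield E) /\
  (quotient_is_semifield E <-> congruence_is_semifield n E).
Proof.
  intro E_cong.
  pose proof (quotient_of_zero_class n E E_cong).
  pose proof (zero_class_of_quotient n E E_cong).
  pose proof (congruence_semifield_of_zero_class n E E_cong).
  pose proof (zero_class_of_congruence_semifield n E).
  unfold zero_class_trivial in *; tauto.
Qed.
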